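(* Consider the ARLOD model on a finite connected graph $G$ with $N\ge 2$ agents, learning rate $\alpha\in(0,1)$, exploration rate $\epsilon\in(0,1)$, and any initial Q-values in $[-1,1]$. Then $$\mathbb{P}\big(\exists\, t_1<\infty \text{ and } o\in\{-1,1\} : Q^i_o(t_1)>Q^i_{-o}(t_1)\ \ \forall i\in\{1,\dots,N\}\big)>0.$$
   Context: The ARLOD (asymmetric reinforcement learning for opinion dynamics) model: $G=(V,E)$ is a finite simple undirected graph on vertex set $V=\{1,\dots,N\}$ (agents); $N(i)=\{u:(u,i)\in E\}$ is the neighbourhood of $i$. Each agent $i$ holds two Q-values $Q^i_{1}(t),Q^i_{-1}(t)\in\mathbb{R}$, initialized in $[-1,1]$. The favoured opinion of agent $i$ at time $t$ is $1$ if $Q^i_1(t)\ge Q^i_{-1}(t)$ and $-1$ otherwise. In each discrete round $t$: an agent $i$ is chosen uniformly at random from $V$; $i$ chooses a neighbour $j\in N(i)$ uniformly at random; $i$ expresses an opinion $o_i(t)$, equal to its favoured opinion with probability $1-\epsilon$ and to the other opinion with probability $\epsilon$; $j$ responds with $R_j=1$ if $o_i(t)$ equals $j$'s favoured opinion and $R_j=-1$ otherwise; then only agent $i$ updates, via $Q^i_{o_i(t)}(t+1)=(1-\alpha)Q^i_{o_i(t)}(t)+\alpha R_j$ and $Q^i_{-o_i(t)}(t+1)=Q^i_{-o_i(t)}(t)$. All other agents' Q-values are unchanged in that round. *)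

From HB Require Import structures.
From mathcomp Require Import all_boot all_order all_algebra.
From mathcomp Require Import reals.
Set Implicit Arguments. Unset Strict Implicit. Unset Printing Implicit Defensive.
Import Order.TTheory GRing.Theory Num.Theory.
Local Open Scope ring_scope.

(* Opinions are encoded as booleans: [true] stands for opinion 1,
   [false] for opinion -1. *)

Definition qstate (R : Type) (N : nat) := 'I_N -> bool -> R.

Section ARLOD.
Variables (R : realType) (N : nat) (e : rel 'I_N) (alpha eps : R).

Definition favoured (Q : qstate R N) (i : 'I_N) : bool := Q i false <= Q i true.

(* One round's random data: the chosen agent i, the chosen neighbour j,
   and whether i explores (expresses the non-favoured opinion). *)
Definition choice := ('I_N * 'I_N * bool)%type.

Definition choice_prob (c : choice) : R :=
  let: (i, j, x) := c in
  N%:R^-1 * (if e i j then (#|[pred k | e i k]|%:R)^-1 else 0)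
          * (if x then eps else 1 - eps).

Definition step (Q : qstate R N) (c : choice) : qstate R N :=
  let: (i, j, x) := c in
  let o := if x then ~~ favoured Q i else favoured Q i in
  let r : R := if o == favoured Q j then 1 else -1 in
  fun k b => if (k == i) && (b == o) then (1 - alpha) * Q k b + alpha * r
             else Q k b.

Definition state_at (Q0 : qstate R N) (s : seq choice) (t : nat) : qstate R N :=
  foldl step Q0 (take t s).

Definition strict_consensus (Q : qstate R N) : bool :=
  [exists o : bool, [forall i : 'I_N, Q i (~~ o) < Q i o]].

(* Probability (under the ARLOD dynamics started at Q0) of the event
   "there is t1 <= T with strict consensus at time t1", computed exactly
   by summing over all T-round histories. *)
Definition prob_consensus_by (Q0 : qstate R N) (T : nat) : R :=
  \sum_(s : T.-tuple choice)
     (\prod_(c <- s) choice_prob c) *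
     (if [exists t1 : 'I_T.+1, strict_consensus (state_at Q0 s t1)] then 1 else 0).

End ARLOD.

From Pilot Require Import Defs.
From HB Require Import structures.
From mathcomp Require Import all_boot all_order all_algebra.
From mathcomp Require Import reals.
From mathcomp Require Import ring lra zify.
Import Order.TTheory GRing.Theory Num.Theory.
Set Implicit Arguments. Unset Strict Implicit.
Local Open Scope ring_scope.

(* If agent i keeps talking to a neighbour j that favours o, expressing first o
   (rewarded) and then ~~ o (punished), the gap d = Q^i_o - Q^i_{~~o} evolves by
   d |-> (1 - alpha) d + 2 alpha: it grows by at least 2 alpha while d <= 0 and
   stays positive afterwards, so i comes to strictly prefer o after finitely many
   rounds, while j and all other agents are left untouched.  By connectivity, the
   set of agents strictly preferring o can be enlarged along an edge entering it,
   one agent at a time, until it contains everybody.  Every round used has positive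
   probability, so the resulting finite history has positive probability. *)

Lemma neq_negb (b : bool) : b != ~~ b.
Proof. by case: b. Qed.

Lemma connect_cut_edge (T : finType) (e : rel T) (S : {pred T}) x y :
  connect e x y -> x \notin S -> y \in S -> exists u v, [/\ u \notin S, v \in S & e u v].
Proof.
move=> /connectP[p + ->] {y}; elim: p x => [|z p IH] x /=; first by move=> _ /negbTE ->.
move=> /andP[exz zp] xS; have [zS _ | zS] := boolP (z \in S); first by exists x, z.
exact: IH.
Qed.

Section Dynamics.
Variables (R : realType) (N : nat) (e : rel 'I_N) (alpha : R).
Implicit Types (Q : qstate R N) (i j k : 'I_N) (b o x : bool).

Local Notation step := (step alpha).

Definition express i j b Q : qstate R N := step Q (i, j, favoured Q i != b).

Lemma express_self i j b Q :
  express i j b Q i b = (1 - alpha) * Q i b + alpha * (if b == favoured Q j then 1 else -1).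
Proof. by rewrite /express /= eqxx; case: (favoured Q i); case: b. Qed.

Lemma express_self_neq i j b c Q : c != b -> express i j b Q i c = Q i c.
Proof. by rewrite /express /= eqxx; case: (favoured Q i); case: b; case: c. Qed.

Lemma express_other i j k b Q c : k != i -> express i j b Q k c = Q k c.
Proof. by rewrite /express /= => /negbTE ->. Qed.

Lemma favoured_express_other i j k b Q : k != i -> favoured (express i j b Q) k = favoured Q k.
Proof. by move=> ki; rewrite /favoured !express_other. Qed.

Definition push i j Q : qstate R N :=
  express i j (~~ favoured Q j) (express i j (favoured Q j) Q).

Definition gap i o Q : R := Q i o - Q i (~~ o).

Lemma push_other i j k Q b : k != i -> push i j Q k b = Q k b.
Proof. by move=> ki; rewrite /push !express_other. Qed.

Lemma gap_push i j Q : j != i ->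
  gap i (favoured Q j) (push i j Q) = (1 - alpha) * gap i (favoured Q j) Q + 2 * alpha.
Proof.
move=> ji; rewrite /gap /push; set o := favoured Q j; set Q1 := express i j o Q.
have Q1j : favoured Q1 j = o by rewrite favoured_express_other.
have no_neq : ~~ o != o by rewrite eq_sym neq_negb.
rewrite express_self express_self_neq ?neq_negb // Q1j (negbTE no_neq).
rewrite /Q1 express_self express_self_neq // eqxx; ring.
Qed.

Lemma iter_push_other i j k n Q b : k != i -> iter n (push i j) Q k b = Q k b.
Proof. by move=> ki; elim: n => //= n <-; rewrite push_other. Qed.

Lemma favoured_iter_push_other i j n Q : j != i ->
  favoured (iter n (push i j) Q) j = favoured Q j.
Proof. by move=> ji; rewrite /favoured !iter_push_other. Qed.

Hypothesis alpha01 : 0 < alpha < 1.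

Lemma gap_iter_push i j n Q : j != i ->
  let o := favoured Q j in
  0 < gap i o (iter n (push i j) Q) \/
  gap i o Q + n%:R * (2 * alpha) <= gap i o (iter n (push i j) Q).
Proof.
move=> ji o; have /andP[alpha0 alpha1] := alpha01.
elim: n => [|n IH]; first by right; rewrite mul0r addr0.
rewrite iterS; set Q' := iter n _ Q in IH *.
have := gap_push Q' ji; rewrite favoured_iter_push_other // -/o => ->.
set d := gap i o Q' in IH *; rewrite -natr1.
have [d_gt0 | d_le0] := ltP 0 d.
  have : 0 < (1 - alpha) * d by rewrite pmulr_lgt0 // subr_gt0.
  by left; lra.
right; have : 0 <= alpha * - d by rewrite mulr_ge0 ?oppr_ge0 // ltW.
case: IH => IH; lra.
Qed.

Lemma iter_push_separates i j Q : j != i ->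
  exists n, 0 < gap i (favoured Q j) (iter n (push i j) Q).
Proof.
move=> ji; have /andP[alpha0 _] := alpha01.
set g := gap i (favoured Q j) Q.
have alpha2_gt0 : 0 < 2 * alpha by rewrite mulr_gt0.
have bound_ge0 : 0 <= `|g| / (2 * alpha) by rewrite divr_ge0 // ltW.
have := archi_boundP bound_ge0; rewrite ltr_pdivrMr //; set n := Num.bound _ => n_large.
exists n.
have : - g <= `|g| by rewrite -normrN ler_norm.
have [|] := gap_iter_push n Q ji; rewrite -/g; lra.
Qed.

Definition reachable Q Q' :=
  exists2 s : seq (Defs.choice N), all (fun c => e c.1.1 c.1.2) s & foldl step Q s = Q'.

Lemma reachable_refl Q : reachable Q Q.
Proof. by exists [::]. Qed.

Lemma reachable_trans Q1 Q2 Q3 : reachable Q1 Q2 -> reachable Q2 Q3 -> reachable Q1 Q3.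
Proof.
by move=> [s1 s1e <-] [s2 s2e <-]; exists (s1 ++ s2); rewrite ?all_cat ?s1e ?foldl_cat.
Qed.

Lemma reachable_express i j b Q : e i j -> reachable Q (express i j b Q).
Proof. by move=> eij; exists [:: (i, j, favoured Q i != b)]; rewrite //= eij. Qed.

Lemma reachable_iter_push i j n Q : e i j -> reachable Q (iter n (push i j) Q).
Proof.
move=> eij; elim: n => [|n IH]; first exact: reachable_refl.
apply: reachable_trans IH _; apply: reachable_trans (reachable_express _ _ eij).
exact: reachable_express.
Qed.

Definition strict_set o Q : {set 'I_N} := [set k | Q k (~~ o) < Q k o].

Lemma reachable_convert i j Q : e i j -> j != i ->
  exists2 Q', reachable Q Q' &
    i |: strict_set (favoured Q j) Q \subset strict_set (favoured Q j) Q'.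
Proof.
move=> eij ji; have [n gap_gt0] := iter_push_separates Q ji.
exists (iter n (push i j) Q); first exact: reachable_iter_push.
apply/subsetP => k; rewrite !inE; case: eqVneq => [-> _ | ki] /=.
  by rewrite -subr_gt0.
by rewrite !iter_push_other.
Qed.

Lemma favoured_strict Q k o : Q k (~~ o) < Q k o -> favoured Q k = o.
Proof. by case: o; rewrite /favoured /= => lt; [rewrite ltW | rewrite leNgt lt]. Qed.

Lemma strict_consensus_setT o Q : strict_set o Q = setT -> strict_consensus Q.
Proof.
move=> Sfull; apply/existsP; exists o; apply/forallP => k.
by have := in_setT k; rewrite -Sfull inE.
Qed.

Hypothesis e_conn : forall i j : 'I_N, connect e i j.

Lemma reachable_strict_set_proper o Q : strict_set o Q != set0 -> strict_set o Q != setT ->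
  exists2 Q', reachable Q Q' & strict_set o Q \proper strict_set o Q'.
Proof.
set S := strict_set o Q => /set0Pn[r rS]; rewrite -subTset => /subsetPn[u0 _ u0S].
have [u [v [uS vS euv]]] := connect_cut_edge (e_conn u0 r) u0S rS.
have vu : v != u by apply: contraNneq uS => <-.
have fav_v : favoured Q v = o by apply: favoured_strict; rewrite inE in vS.
have [Q' reachQ' sub'] := reachable_convert Q euv vu; rewrite fav_v in sub'.
exists Q' => //; apply/properP; split; last by exists u => //; apply: (subsetP sub'); rewrite setU11.
exact: subset_trans (subsetUr _ _) sub'.
Qed.

Lemma reachable_strict_consensus o Q : strict_set o Q != set0 ->
  exists2 Q', reachable Q Q' & strict_consensus Q'.
Proof.
have [n] := ubnP #|~: strict_set o Q|; elim: n Q => // n IH Q lt_card S0.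
have [Sfull | SnT] := eqVneq (strict_set o Q) setT.
  by exists Q; [exact: reachable_refl | exact: strict_consensus_setT Sfull].
have [Q1 reachQ1 ltS] := reachable_strict_set_proper S0 SnT.
have [|| Q2 reachQ2 cons2] := IH Q1.
- have := cardsC (strict_set o Q); have := cardsC (strict_set o Q1).
  have := proper_card ltS; lia.
- by apply: contraTneq (proper_sub ltS) => ->; rewrite subset0.
by exists Q2 => //; exact: reachable_trans reachQ1 reachQ2.
Qed.

End Dynamics.

Section Probability.
Variables (R : realType) (N : nat) (e : rel 'I_N) (alpha eps : R).
Hypothesis eps01 : 0 < eps < 1.

Lemma choice_prob_ge0 (c : Defs.choice N) : 0 <= choice_prob e eps c.
Proof.
have /andP[eps0 eps1] := eps01; case: c => [[i j] x] /=.
rewrite !mulr_ge0 ?invr_ge0 ?ler0n //; first by case: ifP; rewrite ?invr_ge0 ?ler0n.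
by case: x; rewrite ?subr_ge0 ltW.
Qed.

Lemma choice_prob_gt0 i j x : e i j -> 0 < choice_prob e eps (i, j, x).
Proof.
have /andP[eps0 eps1] := eps01; move=> eij /=.
have N_gt0 : (0 < N)%N by apply: leq_ltn_trans (ltn_ord i).
have deg_gt0 : (0 < #|[pred k | e i k]|)%N by apply/card_gt0P; exists j.
rewrite eij !mulr_gt0 ?invr_gt0 ?ltr0n //.
by case: x; rewrite ?subr_gt0.
Qed.

Lemma prob_consensus_by_gt0 Q0 Q : reachable e alpha Q0 Q -> strict_consensus Q ->
  exists T, 0 < prob_consensus_by e alpha eps Q0 T.
Proof.
move=> [s se <-] cons; exists (size s).
rewrite /prob_consensus_by (bigD1 (in_tuple s)) //=.
have -> : [exists t1 : 'I_(size s).+1, strict_consensus (state_at alpha Q0 s t1)].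
  by apply/existsP; exists ord_max; rewrite /state_at take_size.
rewrite mulr1; apply: ltr_pwDl; last first.
  apply: sumr_ge0 => t _; rewrite mulr_ge0 //; last by case: ifP.
  by apply: prodr_ge0 => c _; exact: choice_prob_ge0.
elim: s se {cons} => [|[[i j] x] s IH] /=; first by rewrite big_nil.
by move=> /andP[eij se]; rewrite big_cons mulr_gt0 ?choice_prob_gt0 // IH.
Qed.

End Probability.

Theorem lemma2 (R : realType) (N : nat) (hN : (2 <= N)%N) (e : rel 'I_N)
  (e_sym : symmetric e) (e_irr : irreflexive e)
  (e_conn : forall i j : 'I_N, connect e i j)
  (alpha eps : R) (halpha : 0 < alpha < 1) (heps : 0 < eps < 1)
  (Q0 : qstate R N) (hQ0 : forall i b, -1 <= Q0 i b <= 1) :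
  exists T : nat, 0 < prob_consensus_by e alpha eps Q0 T.
Proof.
pose r : 'I_N := Ordinal (ltnW hN); pose r' : 'I_N := Ordinal hN.
have r'_notin : r' \notin [set r] by rewrite inE.
have [u [_ [uS /set1P -> eur]]] := connect_cut_edge (e_conn r' r) r'_notin (set11 r).
have ru : r != u by apply: contraNneq uS => <-; exact: set11.
have [Q1 reachQ1 sub1] := reachable_convert halpha Q0 eur ru.
have S1 : strict_set (favoured Q0 r) Q1 != set0.
  by apply/set0Pn; exists u; apply: (subsetP sub1); exact: setU11.
have [Q2 reachQ2 cons2] := reachable_strict_consensus halpha e_conn S1.
exact (prob_consensus_by_gt0 heps (reachable_trans reachQ1 reachQ2) cons2).
Qed.
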